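(* Let $n\ge2$, $\alpha,\beta>0$ with $\alpha^2+\beta^2=1$ and $r=\alpha/\beta\in(0,1)$. Let $\mathcal E_\gamma$, $\gamma\in[0,1]$, be a family of single-qubit channels acting as $|0\rangle\langle0|\mapsto|0\rangle\langle0|$, $|1\rangle\langle1|\mapsto(1-\gamma)|1\rangle\langle1|+\gamma|0\rangle\langle0|$, $|0\rangle\langle1|\mapsto\lambda(\gamma)|0\rangle\langle1|$ with $\lambda(\gamma)\in\mathbb R$ and $\lambda(\gamma)^2\le1-\gamma$, and define $S(\gamma)=\lambda(\gamma)^2/(1-\gamma)$ for $\gamma\in[0,1)$. Let $\rho(\gamma)=\mathcal E_\gamma^{\otimes n}(|\psi_n\rangle\langle\psi_n|)$, $|\psi_n\rangle=\alpha|0^n\rangle+\beta|1^n\rangle$, so that $P_0=\alpha^2+\beta^2\gamma^n$, $P_n=\beta^2(1-\gamma)^n$, $|c|=\alpha\beta|\lambda(\gamma)|^n$. Suppose $\gamma_e\in(0,1)$ is the unique $\gamma\in(0,1)$ at which the partial-transpose block determinant $\beta^4[\gamma(1-\gamma)]^n-\alpha^2\beta^2\lambda(\gamma)^{2n}$ vanishes (the bipartite-negativity death threshold, which is the same for every bipartition), and $\gamma_+\in(0,1)$ is the unique $\gamma\in(0,1)$ with $|c(\gamma)|=P_n(\gamma)$ and $P_0(\gamma)\ge|c(\gamma)|$. Then $$r^{2/n}S(\gamma_e)=\gamma_e,\qquad r^{2/n}S(\gamma_+)=1-\gamma_+,$$ and $\gamma_e+\gamma_+=1$ holds if and only if $S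(\gamma_e)=S(1-\gamma_e)$.
   Context: Here $c=\langle0^n|\rho(\gamma)|1^n\rangle=\alpha\beta\lambda(\gamma)^n$, and $\rho(\gamma)$ lies in the real GHZ-$X$ manifold (diagonal in the computational basis except for the entry between $|0^n\rangle$ and $|1^n\rangle$). Pure amplitude damping is the case $\lambda=\sqrt{1-\gamma}$, $S\equiv1$. *)

From Stdlib Require Import Reals.
Open Scope R_scope.

Definition P0 (alpha beta : R) (n : nat) (g : R) : R :=
  alpha ^ 2 + beta ^ 2 * g ^ n.

Definition Pn (beta : R) (n : nat) (g : R) : R :=
  beta ^ 2 * (1 - g) ^ n.

Definition coh (alpha beta : R) (lam : R -> R) (n : nat) (g : R) : R :=
  alpha * beta * (lam g) ^ n.

Definition ptdet (alpha beta : R) (lam : R -> R) (n : nat) (g : R) : R :=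
  beta ^ 4 * (g * (1 - g)) ^ n - alpha ^ 2 * beta ^ 2 * (lam g) ^ (2 * n).

(* S(gamma) = lam(gamma)^2 / (1 - gamma), meaningful for gamma in [0,1) *)
Definition Sfun (lam : R -> R) (g : R) : R := (lam g) ^ 2 / (1 - g).

From Stdlib Require Import Reals Lra Lia.
Open Scope R_scope.

(* With [k = r^(2/n)], so that [k^n = r^2], every condition in play becomes an
   equation between n-th powers of non-negative quantities once the common
   factor [beta^2 (1 - g)^n] is removed using [lam^(2n) = S^n (1 - g)^n]:
   [ptdet = 0] reads [beta^2 g^n = alpha^2 S^n], i.e. [k S(g) = g], and
   [|c| = P_n] reads [alpha^2 S^n = beta^2 (1 - g)^n], i.e. [k S(g) = 1 - g].
   Hence [gamma_e + gamma_+ = 1] forces [S(gamma_e) = S(gamma_+)].  Conversely,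
   if [S(gamma_e) = S(1 - gamma_e)] then [1 - gamma_e] satisfies [|c| = P_n];
   it also satisfies [P_0 >= |c|] because [gamma_e = k S(gamma_e) <= k] gives
   [beta^2 gamma_e^n <= alpha^2], so uniqueness identifies it with [gamma_+]. *)

Lemma pow_lt_compat_l (x y : R) (m : nat) :
  (0 < m)%nat -> 0 <= x -> x < y -> x ^ m < y ^ m.
Proof.
  intros Hm Hx Hxy; induction m as [|[|m] IH]; [lia | simpl; lra |].
  assert (Hlt := IH ltac:(lia)).
  assert (0 <= x ^ S m) by (apply pow_le; lra).
  change (x * x ^ S m < y * y ^ S m); nra.
Qed.

Lemma pow_eq_iff_nonneg (x y : R) (m : nat) :
  (0 < m)%nat -> 0 <= x -> 0 <= y -> x ^ m = y ^ m <-> x = y.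
Proof.
  intros Hm Hx Hy; split; [| now intros ->].
  intros E; destruct (Rtotal_order x y) as [Hxy | [Hxy | Hxy]]; trivial.
  - pose proof (pow_lt_compat_l x y m Hm Hx Hxy); lra.
  - pose proof (pow_lt_compat_l y x m Hm Hy Hxy); lra.
Qed.

Lemma Rpower_div_INR_pow (x a : R) (n : nat) :
  0 < x -> n <> 0%nat -> Rpower x (a / INR n) ^ n = Rpower x a.
Proof.
  intros Hx Hn.
  rewrite <- Rpower_pow by apply exp_pos.
  rewrite Rpower_mult; f_equal; field; now apply not_0_INR.
Qed.

Lemma Sfun_nonneg (lam : R -> R) (g : R) : g < 1 -> 0 <= Sfun lam g.
Proof.
  intros Hg; unfold Sfun, Rdiv.
  apply Rmult_le_pos; [apply pow2_ge_0 | left; apply Rinv_0_lt_compat; lra].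
Qed.

Lemma Sfun_le_1 (lam : R -> R) (g : R) :
  g < 1 -> lam g ^ 2 <= 1 - g -> Sfun lam g <= 1.
Proof.
  intros Hg Hlam; unfold Sfun.
  apply (Rmult_le_reg_r (1 - g)); [lra |].
  unfold Rdiv; rewrite Rmult_assoc, Rinv_l by lra; lra.
Qed.

Lemma Sfun_pow (lam : R -> R) (g : R) (n : nat) :
  g < 1 -> lam g ^ (2 * n) = Sfun lam g ^ n * (1 - g) ^ n.
Proof.
  intros Hg; unfold Sfun.
  rewrite <- Rpow_mult_distr, pow_mult; f_equal; field; lra.
Qed.

Lemma ptdet_factor (alpha beta : R) (lam : R -> R) (n : nat) (g : R) :
  g < 1 ->
  ptdet alpha beta lam n g =
  beta ^ 2 * (1 - g) ^ n * (beta ^ 2 * g ^ n - alpha ^ 2 * Sfun lam g ^ n).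
Proof.
  intros Hg; unfold ptdet.
  rewrite Sfun_pow, Rpow_mult_distr by exact Hg; ring.
Qed.

Lemma coh_sqr_sub_Pn_sqr (alpha beta : R) (lam : R -> R) (n : nat) (g : R) :
  g < 1 ->
  coh alpha beta lam n g ^ 2 - Pn beta n g ^ 2 =
  beta ^ 2 * (1 - g) ^ n * (alpha ^ 2 * Sfun lam g ^ n - beta ^ 2 * (1 - g) ^ n).
Proof.
  intros Hg; unfold coh, Pn.
  rewrite !Rpow_mult_distr, <- pow_mult, Nat.mul_comm, Sfun_pow by exact Hg.
  ring.
Qed.

Lemma Pn_compl_le_P0_compl (alpha beta : R) (n : nat) (g : R) :
  g <= 1 -> beta ^ 2 * g ^ n <= alpha ^ 2 ->
  Pn beta n (1 - g) <= P0 alpha beta n (1 - g).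
Proof.
  intros Hg Hbound; unfold Pn, P0.
  replace (1 - (1 - g)) with g by ring.
  assert (0 <= beta ^ 2 * (1 - g) ^ n)
    by (apply Rmult_le_pos; [apply pow2_ge_0 | apply pow_le; lra]).
  lra.
Qed.

Section Scaled.

Variables (n : nat) (alpha beta k : R) (lam : R -> R).
Hypotheses (Hn : (0 < n)%nat) (Hbeta : 0 < beta) (Hk : 0 < k)
  (Hkn : k ^ n = (alpha / beta) ^ 2).

Lemma scaled_eq_iff (s t : R) :
  0 <= s -> 0 <= t -> k * s = t <-> alpha ^ 2 * s ^ n = beta ^ 2 * t ^ n.
Proof.
  intros Hs Ht.
  rewrite <- (pow_eq_iff_nonneg (k * s) t n Hn) by (try apply Rmult_le_pos; lra).
  rewrite Rpow_mult_distr, Hkn.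
  assert (Hb2 : 0 < beta ^ 2) by (apply pow_lt; exact Hbeta).
  replace ((alpha / beta) ^ 2 * s ^ n) with (alpha ^ 2 * s ^ n / beta ^ 2)
    by (field; lra).
  split; intros E.
  - rewrite <- E; field; lra.
  - rewrite E; field; lra.
Qed.

Lemma ptdet_eq0_iff (g : R) :
  0 < g < 1 -> ptdet alpha beta lam n g = 0 <-> k * Sfun lam g = g.
Proof.
  intros Hg.
  rewrite scaled_eq_iff, ptdet_factor by (try apply Sfun_nonneg; lra).
  assert (0 < beta ^ 2 * (1 - g) ^ n)
    by (apply Rmult_lt_0_compat; apply pow_lt; lra).
  split; intros E.
  - destruct (Rmult_integral _ _ E); lra.
  - rewrite E; ring.
Qed.

Lemma abs_coh_eq_Pn_iff (g : R) :
  g < 1 -> Rabs (coh alpha beta lam n g) = Pn beta n g <-> k * Sfun lam g = 1 - g.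
Proof.
  intros Hg.
  assert (HPn : 0 <= Pn beta n g)
    by (apply Rmult_le_pos; [apply pow2_ge_0 | apply pow_le; lra]).
  rewrite <- (pow_eq_iff_nonneg _ _ 2 ltac:(lia) (Rabs_pos _) HPn), pow2_abs.
  rewrite scaled_eq_iff by (try apply Sfun_nonneg; lra).
  assert (0 < beta ^ 2 * (1 - g) ^ n)
    by (apply Rmult_lt_0_compat; apply pow_lt; lra).
  pose proof (coh_sqr_sub_Pn_sqr alpha beta lam n g Hg) as D.
  split; intros E.
  - rewrite E, Rminus_diag in D.
    symmetry in D; destruct (Rmult_integral _ _ D); lra.
  - rewrite E, Rminus_diag, Rmult_0_r in D; lra.
Qed.

Lemma scaled_fixed_point_bound (g : R) :
  0 <= g -> k * Sfun lam g = g -> Sfun lam g <= 1 -> beta ^ 2 * g ^ n <= alpha ^ 2.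
Proof.
  intros Hg Hfix HS1.
  assert (HS0 : 0 <= Sfun lam g)
    by (rewrite <- Hfix in Hg; apply (Rmult_le_reg_l k); lra).
  assert (Hpow : alpha ^ 2 * Sfun lam g ^ n = beta ^ 2 * g ^ n)
    by (apply (proj1 (scaled_eq_iff _ _ HS0 Hg)), Hfix).
  assert (Sfun lam g ^ n <= 1)
    by (rewrite <- (pow1 n); apply pow_incr; lra).
  pose proof (pow2_ge_0 alpha); nra.
Qed.

End Scaled.

Theorem proposition1 (n : nat) (alpha beta : R) (lam : R -> R) (ge gp : R) :
  (2 <= n)%nat ->
  0 < alpha -> 0 < beta -> alpha ^ 2 + beta ^ 2 = 1 ->
  0 < alpha / beta < 1 ->
  (forall g, 0 <= g <= 1 -> (lam g) ^ 2 <= 1 - g) ->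
  0 < ge < 1 -> ptdet alpha beta lam n ge = 0 ->
  (forall g, 0 < g < 1 -> ptdet alpha beta lam n g = 0 -> g = ge) ->
  0 < gp < 1 ->
  Rabs (coh alpha beta lam n gp) = Pn beta n gp ->
  P0 alpha beta n gp >= Rabs (coh alpha beta lam n gp) ->
  (forall g, 0 < g < 1 ->
     Rabs (coh alpha beta lam n g) = Pn beta n g ->
     P0 alpha beta n g >= Rabs (coh alpha beta lam n g) -> g = gp) ->
  Rpower (alpha / beta) (2 / INR n) * Sfun lam ge = ge /\
  Rpower (alpha / beta) (2 / INR n) * Sfun lam gp = 1 - gp /\
  (ge + gp = 1 <-> Sfun lam ge = Sfun lam (1 - ge)).
Proof.
  intros Hn Ha Hb _ Hr Hlam Hge Hdet _ Hgp Hcp _ Hup.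
  set (k := Rpower (alpha / beta) (2 / INR n)).
  assert (Hk : 0 < k) by apply exp_pos.
  assert (Hkn : k ^ n = (alpha / beta) ^ 2).
  { unfold k; rewrite Rpower_div_INR_pow by (lra || lia).
    exact (Rpower_pow 2 _ (proj1 Hr)). }
  assert (Hn0 : (0 < n)%nat) by lia.
  assert (Ee : k * Sfun lam ge = ge)
    by (apply (ptdet_eq0_iff n alpha beta k lam Hn0 Hb Hk Hkn); trivial).
  assert (Ep : k * Sfun lam gp = 1 - gp)
    by (apply (abs_coh_eq_Pn_iff n alpha beta k lam Hn0 Hb Hk Hkn); [lra | trivial]).
  split; [exact Ee | split; [exact Ep |]].
  split; intros H.
  - replace (1 - ge) with gp by lra.
    apply (Rmult_eq_reg_l k); lra.
  - assert (Hc : Rabs (coh alpha beta lam n (1 - ge)) = Pn beta n (1 - ge)).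
    { apply (abs_coh_eq_Pn_iff n alpha beta k lam Hn0 Hb Hk Hkn); [lra |].
      rewrite <- H, Ee; ring. }
    assert (Hbound : beta ^ 2 * ge ^ n <= alpha ^ 2).
    { apply (scaled_fixed_point_bound n alpha beta k lam Hn0 Hb Hk Hkn); [lra | exact Ee |].
      apply Sfun_le_1, Hlam; lra. }
    pose proof (Pn_compl_le_P0_compl alpha beta n ge ltac:(lra) Hbound).
    assert (1 - ge = gp) by (apply Hup; lra).
    lra.
Qed.
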